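(* Let $\eta$ be a probability measure on $\Theta$ equivalent to $\mu$, $\alpha\in(0,1]$, and let $(R^*_\theta,p^*_\theta)_{\theta\in\Theta}$ be an incentive efficient menu optimal for problem (W). Suppose the premia satisfy, for every $\theta$, $$p^*_\theta=\int_0^{\bar L}\big[1-g_{\underline\theta}(F_{\underline\theta}(l))\big]dl-\int_{\underline\theta}^{\theta}\int_0^{\bar L}\Big[\frac{\partial g_s}{\partial s}(F_s(l))+g_s'(F_s(l))\frac{\partial F_s(l)}{\partial s}\Big]\frac{\partial R^*_s(l)}{\partial l}dl\,ds-\int_0^{\bar L}\big[1-g_\theta(F_\theta(l))\big]\frac{\partial R^*_\theta(l)}{\partial l}dl.$$ Then: (1) if $\frac{\partial R^*_\theta(l)}{\partial l}\equiv0$, then $\int_\Theta\int_0^{\bar L}g^{In}(F_\theta(l))\,dl\,d\mu\ge\int_0^{\bar L}g_{\underline\theta}(F_{\underline\theta}(l))\,dl$; (2) if $\frac{\partial R^*_\theta(l)}{\partial l}\equiv1$, then $V_\theta(R^*_\theta,p^*_\theta)=0$ for all $\theta\in\Theta$; (3) if $\frac{\partial R^*_\theta(l)}{\partial l}$ takes values in $(0,1)$, then $$\int_\Theta\int_0^{\bar L}g^{In}(F_\theta(l))\,dl\,d\mu\ge\int_0^{\bar L}g_{\underline\theta}(F_{\underline\theta}(l))dl+\int_\Theta U_\theta(R^*_\theta,p^*_\theta)d\mu-U_{\underline\theta}(R^*_{\underline\theta},p^*_{\underline\theta})+\int_\Theta\int_0^{\bar L}\big[g^{In}(F_\theta(l))-g_\theta(F_\theta(l))\big]\frac{\partial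 R^*_\theta(l)}{\partial l}dl\,d\mu.$$ Moreover, if $p^*_\theta=0$ and $R^*_\theta=0$ for each $\theta\in\Theta$, then $g^{In}(F_\theta(l))=1$ for almost every $\theta\in\Theta$ and almost every $l\in[0,\bar L]$.
   Context: Setting (Yaari dual-utility insurance model). $(S,\Sigma,\mathbb P)$ is a probability space. Types: $\Theta=[\underline\theta,\bar\theta]$ with Borel $\sigma$-algebra and a probability measure $\mu$ with a Lebesgue density $q$. Fix $\bar L<\infty$. For each $\theta$ the type-$\theta$ agent faces a loss $L_\theta$ (bounded, $\Sigma$-measurable, values in $[0,\bar L]$) with continuous distribution function $F_\theta(l)=\mathbb P(L_\theta\le l)$. Retention functions: $\mathcal R=\{R:[0,\bar L]\to[0,\bar L]: R(0)=0,\ 0\le\partial R(l)/\partial l\le1\}$. A menu is a family $(R_\theta,p_\theta)_{\theta\in\Theta}$ with $R_\theta\in\mathcal R$, $p_\theta\in\mathbb R$. A distortion function is a nondecreasing $g:[0,1]\to[0,1]$ with $g(0)=0,g(1)=1$; type $\theta$ has distortion $g_\theta$ (with $g'_\theta$ the derivative in $t$), the insurer $g^{In}$. Utilities: $U_\theta(R,p)=-p-\int_0^{\bar L}[1-g_\theta(F_\theta(l))]\frac{\partial R(l)}{\partial l}dl$, $V_\theta(R,p)=p-\int_0^{\bar L}[1-g^{In}(F_\theta(l))](1-\frac{\partial R(l)}{\partial l})dl$, no-insurance utility $U_\theta(L_\theta,0)=-\int_0^{\bar L}[1-g_\theta(F_\theta(l))]dl$. Throughout, for every menu $\theta\mapsto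 U_\theta(R_\theta,p_\theta)$, $\theta\mapsto V_\theta(R_\theta,p_\theta)$ lie in $L^1(\Theta,\mu)$. Individually rational (IR): $U_\theta(R_\theta,p_\theta)\ge U_\theta(L_\theta,0)$ for all $\theta$ and $\int_\Theta V_\theta(R_\theta,p_\theta)d\mu\ge0$. Incentive compatible (IC): $U_\theta(R_\theta,p_\theta)\ge U_\theta(R_{\theta'},p_{\theta'})$ for all $\theta,\theta'$. Incentive efficient: an IR and IC menu $(R^*,p^* )$ such that no IR and IC menu $(R,p)$ has $U_\theta(R_\theta,p_\theta)\ge U_\theta(R^*_\theta,p^*_\theta)$ $\mu$-a.e. and $\int V_\theta(R_\theta,p_\theta)d\mu\ge\int V_\theta(R^*_\theta,p^*_\theta)d\mu$ with strict inequality in the latter or strict inequality in the former on a set of positive $\mu$-measure. Problem (W): $\sup\{\alpha\int_\Theta U_\theta(R_\theta,p_\theta)d\eta+(1-\alpha)\int_\Theta V_\theta(R_\theta,p_\theta)d\mu\}$ over IR and IC menus. Standing assumptions: (A1) $g^{In}(t)\ge g_\theta(t)$ for all $t,\theta$. (A2) $\theta\mapsto F_\theta(l)$ differentiable, $\{F_\theta\}$ uniformly Lipschitz in $\theta$, $\partial F_\theta(l)/\partial\theta\le0$ for all $l$. (A3) each $g_\theta$ differentiable with $g'_\theta\le\delta$ for a common $\delta<\infty$; $\theta\mapsto g_\theta(t)$ differentiable, uniformly Lipschitz in $\theta$; $\partial g_\theta(t)/\partial\theta\le0$ for $t\in(0,1)$. The conditions ''$\frac{\partial R^*_\theta(l)}{\partial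 l}\equiv0$'' etc. refer to all $\theta\in\Theta$ and $l\in[0,\bar L]$. *)

From HB Require Import structures.
From mathcomp Require Import all_boot all_order all_algebra.
From mathcomp Require Import all_classical all_reals all_analysis.
Set Implicit Arguments. Unset Strict Implicit. Unset Printing Implicit Defensive.
Import Order.TTheory GRing.Theory Num.Theory.
Import numFieldNormedType.Exports.
Local Open Scope classical_set_scope.
Local Open Scope ring_scope.

Section Yaari.
Context (R : realType).

Definition intL (Lb : R) (f : R -> R) : R :=
  Rintegral (@lebesgue_measure R) `[0, Lb] f.

Definition Fdist d (T : measurableType d) (P : probability T R)
  (L : R -> T -> R) (theta l : R) : R :=
  fine (P [set w | L theta w <= l]).

Definition retention (Lb : R) (Rf : R -> R) : Prop :=
  Rf 0 = 0 /\
  (forall l, 0 <= l <= Lb -> 0 <= Rf l <= Lb) /\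
  (forall l, 0 <= l <= Lb -> derivable Rf l 1 /\ 0 <= derive1 Rf l <= 1).

Definition distortion (g : R -> R) : Prop :=
  g 0 = 0 /\ g 1 = 1 /\ (forall t, 0 <= t <= 1 -> 0 <= g t <= 1) /\
  (forall s t, 0 <= s -> s <= t -> t <= 1 -> g s <= g t).

Definition Uag (Lb : R) (g : R -> R -> R) (F : R -> R -> R)
  (theta : R) (Rf : R -> R) (p : R) : R :=
  - p - intL Lb (fun l => (1 - g theta (F theta l)) * derive1 Rf l).

Definition Vins (Lb : R) (gIn : R -> R) (F : R -> R -> R)
  (theta : R) (Rf : R -> R) (p : R) : R :=
  p - intL Lb (fun l => (1 - gIn (F theta l)) * (1 - derive1 Rf l)).

(* no-insurance utility U_theta(L_theta, 0) *)
Definition Unone (Lb : R) (g : R -> R -> R) (F : R -> R -> R) (theta : R) : R :=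
  - intL Lb (fun l => 1 - g theta (F theta l)).

Section Menus.
Variables (tl th Lb : R) (mu : {measure set R -> \bar R})
  (g : R -> R -> R) (gIn : R -> R) (F : R -> R -> R).

Definition Theta : set R := `[tl, th].

Definition menu (Rm : R -> R -> R) (pm : R -> R) : Prop :=
  (forall theta, Theta theta -> retention Lb (Rm theta)) /\
  mu.-integrable Theta (fun theta => (Uag Lb g F theta (Rm theta) (pm theta))%:E) /\
  mu.-integrable Theta (fun theta => (Vins Lb gIn F theta (Rm theta) (pm theta))%:E).

Definition IR (Rm : R -> R -> R) (pm : R -> R) : Prop :=
  (forall theta, Theta theta ->
     Uag Lb g F theta (Rm theta) (pm theta) >= Unone Lb g F theta) /\
  (\int[mu]_(theta in Theta) (Vins Lb gIn F theta (Rm theta) (pm theta))%:E >= 0)%E.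

Definition IC (Rm : R -> R -> R) (pm : R -> R) : Prop :=
  forall theta theta', Theta theta -> Theta theta' ->
    Uag Lb g F theta (Rm theta) (pm theta) >= Uag Lb g F theta (Rm theta') (pm theta').

Definition feasible Rm pm := menu Rm pm /\ IR Rm pm /\ IC Rm pm.

Definition totV Rm pm : \bar R :=
  \int[mu]_(theta in Theta) (Vins Lb gIn F theta (Rm theta) (pm theta))%:E.

Definition incentive_efficient (Rs : R -> R -> R) (ps : R -> R) : Prop :=
  feasible Rs ps /\
  ~ (exists Rm pm, feasible Rm pm /\
      {ae mu, forall theta, Theta theta ->
         (Uag Lb g F theta (Rm theta) (pm theta) >= Uag Lb g F theta (Rs theta) (ps theta))%R} /\
      (totV Rm pm >= totV Rs ps)%E /\
      ((totV Rm pm > totV Rs ps)%E \/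
       (0 < mu [set theta | Theta theta /\
          (Uag Lb g F theta (Rm theta) (pm theta) > Uag Lb g F theta (Rs theta) (ps theta))%R])%E)).

Definition Wobj (eta : {measure set R -> \bar R}) (alpha : R) Rm pm : \bar R :=
  (alpha%:E * \int[eta]_(theta in Theta) (Uag Lb g F theta (Rm theta) (pm theta))%:E
   + (1 - alpha)%:E * totV Rm pm)%E.

Definition optimal_W (eta : {measure set R -> \bar R}) (alpha : R) Rs ps : Prop :=
  feasible Rs ps /\
  forall Rm pm, feasible Rm pm -> (Wobj eta alpha Rm pm <= Wobj eta alpha Rs ps)%E.

End Menus.
End Yaari.

From HB Require Import structures.
From mathcomp Require Import all_boot all_order all_algebra.
From mathcomp Require Import all_classical all_reals all_analysis.
From mathcomp Require Import ring lra measurable_realfun.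
Import Order.TTheory GRing.Theory Num.Theory.
Import numFieldNormedType.Exports.
Local Open Scope classical_set_scope.
Local Open Scope ring_scope.

(* Write I t = int gIn(F_t), c = int 1 and J t = int (gIn - g_t)(F_t) R_t'.
   Whatever the premium, U_t + V_t = I t - c - J t.  Integrating in t and
   using int V >= 0 (IR) gives int I >= c + int U + int J, while the premium
   formula at t = tl gives U_tl = int g_tl(F_tl) - c: this is (3); I is
   measurable because F_t(l), hence I t, is nonincreasing in t by (A2).
   Under full insurance (R' = 0) the premium formula makes U constant, equal
   to U_tl, and J vanishes, so (3) reduces to (1).  Without insurance
   (R' = 1) V_t = p_t, IC makes p constant and IR gives p <= 0 <= int V = p.
   For the null menu V_t = - int (1 - gIn(F_t)) <= 0 while int V >= 0, so V
   vanishes mu-a.e., and with it the nonnegative integrand 1 - gIn(F_t). *)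

Section real_functions.
Context {R : realType}.
Implicit Types (a b K : R) (f : R -> R).

Lemma lipschitz_within_continuous (A : set R) K f :
  (forall x y, A x -> A y -> `|f x - f y| <= K * `|x - y|) ->
  {within A, continuous f}.
Proof.
move=> f_lip; apply/subspace_continuousP => x Ax.
apply/cvgrPdist_le => e e0.
have K1 : 0 < `|K| + 1 by rewrite ltr_pwDr // normr_ge0.
apply/nbhs_ballP; exists (e / (`|K| + 1)); first exact: divr_gt0.
move=> y /= xy Ay; apply: (le_trans (f_lip _ _ Ax Ay)).
rewrite -ball_normE /= ltr_pdivlMr // in xy.
have := normr_ge0 (x - y); have := ler_norm K; nra.
Qed.

Lemma measurable_fun_itv_nonincreasing a b f :
  {in `[a, b] &, {homo f : x y /~ x <= y}} -> measurable_fun `[a, b] f.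
Proof.
move=> f_ni; apply: (measurability (@RGenCInfty.G R)) => [|/= _ [_] [r] -> <-].
  exact: RGenCInfty.measurableE.
apply: is_interval_measurable => s t [/= Ds fs] [/= Dt ft] u /andP[su ut].
have Du : u \in `[a, b].
  move: Ds Dt; rewrite !in_itv /= => /andP[aS _] /andP[_ tb].
  by rewrite (le_trans aS su) (le_trans ut tb).
split=> //; move: ft; rewrite !in_itv /= !andbT => /le_trans; apply.
exact: f_ni.
Qed.

Lemma measurable_derive1 a b f : {in `[a, b], forall x, derivable f x 1} ->
  measurable_fun `[a, b] (derive1 f).
Proof.
move=> f_der; have [ab|ba] := leP a b; last first.
  by rewrite set_itv_ge ?bnd_simp -?ltNge //; exact: measurable_fun_set0.
have mf : measurable_fun `[a, b] f.
  apply: subspace_continuous_measurable_fun => //.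
  exact: derivable_within_continuous.
move/(measurable_restrictT _ (measurable_itv _)) : mf => mf.
rewrite -(@setUitv1 _ _ (BLeft a) b true) ?bnd_simp //.
apply/measurable_funU => //; split; last exact: measurable_fun_set1.
pose quot n x := (harmonic n)^-1 * ((f \_ `[a, b]) (x + harmonic n) - (f \_ `[a, b]) x).
apply: (@measurable_fun_cvg _ _ _ _ quot).
  move=> n; apply: measurable_funM; first exact: measurable_cst.
  apply/measurable_funTS/measurable_funB => //.
  by apply: measurableT_comp mf _; apply: measurable_funD.
move=> x /=; rewrite in_itv /= => /andP[ax xb].
have hne n : harmonic n != 0 :> R by rewrite gt_eqF // harmonic_gt0.
have : derivable f x 1 by apply: f_der; rewrite in_itv /= ax ltW.
rewrite /derivable => /cvgr_dnbhsP /(_ harmonic (conj hne cvg_harmonic)) hc.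
rewrite derive1E; apply: cvg_trans hc; apply: near_eq_cvg.
have bx : 0 < b - x by rewrite subr_gt0.
move: (@cvg_harmonic R) => /cvgr_dist_lt /(_ _ bx); apply: filterS => n /=.
rewrite sub0r normrN ger0_norm ?harmonic_ge0 // => hn.
have Dx : x \in `[a, b] by rewrite in_itv /= ax ltW.
have Dxn : x + harmonic n \in `[a, b].
  rewrite in_itv /= -lerBrDl (ltW hn) andbT.
  by rewrite (le_trans ax) // lerDl harmonic_ge0.
by rewrite /quot !patchE !mem_set //= [_%:A]mulr1 [_ + x]addrC.
Qed.

End real_functions.

Section Rintegral_facts.
Context {R : realType} {d} {T : measurableType d} (mu : {measure set T -> \bar R}).
Implicit Types (D : set T) (f : T -> R).

Lemma EFin_Rintegral {D f} : measurable D -> mu.-integrable D (EFin \o f) ->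
  (\int[mu]_(x in D) (f x)%:E)%E = (\int[mu]_(x in D) f x)%:E.
Proof. by move=> mD fint; rewrite /Rintegral fineK //; exact: integrable_fin_num. Qed.

Lemma integrableB_EFin {D f1 f2} : measurable D ->
  mu.-integrable D (EFin \o f1) -> mu.-integrable D (EFin \o f2) ->
  mu.-integrable D (EFin \o (fun x => f1 x - f2 x)).
Proof.
move=> mD i1 i2.
by apply: eq_integrable (integrableB mD i1 i2) => // x _; rewrite /= EFinB.
Qed.

Lemma integrableD_EFin {D f1 f2} : measurable D ->
  mu.-integrable D (EFin \o f1) -> mu.-integrable D (EFin \o f2) ->
  mu.-integrable D (EFin \o (fun x => f1 x + f2 x)).
Proof.
move=> mD i1 i2.
by apply: eq_integrable (integrableD mD i1 i2) => // x _; rewrite /= EFinD.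
Qed.

Lemma Rintegral0_eq {D f} : (forall x, D x -> f x = 0) -> \int[mu]_(x in D) f x = 0.
Proof. by move=> f0; rewrite /Rintegral integral0_eq // => x Dx; rewrite f0. Qed.

Lemma ae_eq0_Rintegral_le0 {D f} : measurable D ->
  mu.-integrable D (EFin \o f) -> (forall x, D x -> 0 <= f x) ->
  \int[mu]_(x in D) f x <= 0 -> {ae mu, forall x, D x -> f x = 0}.
Proof.
move=> mD fint f_ge0 f_le0.
have f0 : \int[mu]_(x in D) f x = 0 by apply/le_anti; rewrite f_le0 Rintegral_ge0.
have : (\int[mu]_(x in D) `|(f x)%:E| = 0)%E.
  under eq_integral => x /[!inE] Dx do rewrite gee0_abs ?lee_fin ?f_ge0 //.
  by rewrite -[LHS]fineK ?integrable_fin_num // -/(Rintegral _ _ _) f0.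
move/(ae_eq_integral_abs mu mD (measurable_int _ fint)); apply: filterS.
by move=> x fx0 Dx; case: (fx0 Dx).
Qed.

End Rintegral_facts.

Section integral_over_losses.
Context {R : realType}.
Variable Lb : R.
Implicit Types (f a b r : R -> R) (M : R).

Lemma intL_integrable M f : measurable_fun `[0, Lb] f ->
  (forall l, 0 <= l <= Lb -> `|f l| <= M) ->
  (@lebesgue_measure R).-integrable `[0, Lb] (EFin \o f).
Proof.
move=> mf f_le.
have fin : (@lebesgue_measure R `[0%R, Lb]%classic < +oo)%E.
  by rewrite lebesgue_measure_itv; case: ifP => _; rewrite ltry.
apply: measurable_bounded_integrable => //.
exists M; split; first exact: num_real.
move=> y My x; rewrite /= in_itv /= => /f_le/le_trans; apply; exact: ltW.
Qed.

Lemma eq_intL_itvoo f1 f2 :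
  measurable_fun `[0, Lb] f1 -> measurable_fun `[0, Lb] f2 ->
  {in `]0, Lb[, f1 =1 f2} -> intL Lb f1 = intL Lb f2.
Proof.
move=> mf1 mf2 f12; rewrite /intL /Rintegral.
have mS (f : R -> R) : measurable_fun `[0, Lb] f ->
    measurable_fun `]0, Lb[ (EFin \o f).
  move=> mf; apply/measurable_EFinP; apply: measurable_funS mf => //.
  exact: subset_itv_oo_cc.
rewrite !(@integral_itv_bndoo _ 0 Lb _ true false); last 2 first.
- exact: mS mf2.
- exact: mS mf1.
by congr fine; apply: eq_integral => x /[!inE] /f12 ->.
Qed.

Lemma intL_surplus {a b r} :
  measurable_fun `[0, Lb] a -> measurable_fun `[0, Lb] b ->
  measurable_fun `[0, Lb] r ->
  (forall l, 0 <= l <= Lb -> [/\ 0 <= a l <= 1, 0 <= b l <= 1 & 0 <= r l <= 1]) ->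
  intL Lb (fun l => (1 - b l) * r l) + intL Lb (fun l => (1 - a l) * (1 - r l)) =
  intL Lb (fun=> 1) - intL Lb a + intL Lb (fun l => (a l - b l) * r l).
Proof.
move=> ma mb mr abr01.
have m1 : measurable_fun `[0, Lb] (fun=> 1 : R) by exact: measurable_cst.
have int1 f : measurable_fun `[0, Lb] f ->
    (forall l, 0 <= l <= Lb -> -1 <= f l <= 1) ->
    (@lebesgue_measure R).-integrable `[0, Lb] (EFin \o f).
  by move=> mf f1; apply: (intL_integrable 1) => // l /f1; rewrite ler_norml.
have i1 : (@lebesgue_measure R).-integrable `[0, Lb] (EFin \o fun=> 1 : R).
  by apply: int1 => // l _; rewrite lexx andbT; lra.
have ia : (@lebesgue_measure R).-integrable `[0, Lb] (EFin \o a).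
  by apply: int1 => // l /abr01[/andP[? ?] _ _]; apply/andP; split; lra.
have i1a : (@lebesgue_measure R).-integrable `[0, Lb] (EFin \o fun l => 1 - a l).
  by apply: int1 => [|l /abr01[/andP[? ?] _ _]]; [exact: measurable_funB|lra].
have ibr : (@lebesgue_measure R).-integrable `[0, Lb]
    (EFin \o fun l => (1 - b l) * r l).
  apply: int1 => [|l /abr01[_ /andP[? ?] /andP[? ?]]]; last by apply/andP; split; nra.
  by apply: measurable_funM => //; exact: measurable_funB.
have iar : (@lebesgue_measure R).-integrable `[0, Lb]
    (EFin \o fun l => (1 - a l) * (1 - r l)).
  apply: int1 => [|l /abr01[/andP[? ?] _ /andP[? ?]]]; last by apply/andP; split; nra.
  by apply: measurable_funM; exact: measurable_funB.
have iabr : (@lebesgue_measure R).-integrable `[0, Lb]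
    (EFin \o fun l => (a l - b l) * r l).
  apply: int1 => [|l /abr01[/andP[? ?] /andP[? ?] /andP[? ?]]].
    by apply: measurable_funM => //; exact: measurable_funB.
  by apply/andP; split; nra.
transitivity (intL Lb (fun l => (1 - a l) + (a l - b l) * r l)).
  by rewrite /intL -RintegralD //; apply: eq_Rintegral => l _; ring.
by rewrite /intL RintegralD // RintegralB.
Qed.

End integral_over_losses.

Section yaari_utilities.
Context {R : realType}.
Implicit Types (Lb l theta : R) (h f : R -> R).

Lemma measurable_sublevel {d} {T : measurableType d} {f : T -> R} l :
  measurable_fun setT f -> measurable [set w | f w <= l].
Proof.
move=> mf; rewrite -[X in measurable X]setTI.
exact: (mf measurableT _ (measurable_itv `]-oo, l])).
Qed.

Lemma Fdist_ge0_le1 {d} {T : measurableType d} {P : probability T R}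
    {L : R -> T -> R} {theta} l :
  measurable_fun setT (L theta) -> 0 <= Fdist P L theta l <= 1.
Proof.
move=> mL; have mA := measurable_sublevel l mL.
rewrite /Fdist fine_ge0 ?measure_ge0 //= -lee_fin fineK ?fin_num_measure //.
exact: probability_le1.
Qed.

Lemma Fdist_nondecreasing {d} {T : measurableType d} {P : probability T R}
    {L : R -> T -> R} {theta} :
  measurable_fun setT (L theta) -> {homo Fdist P L theta : x y / x <= y}.
Proof.
move=> mL x y xy; have mA l := measurable_sublevel l mL.
rewrite /Fdist -lee_fin !fineK ?fin_num_measure //.
by apply: le_measure; rewrite ?inE // => w /= /le_trans; apply.
Qed.

Lemma distortion_comp_ge0_le1 h f x : distortion h ->
  (forall x, 0 <= f x <= 1) -> 0 <= h (f x) <= 1.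
Proof. by case=> _ [_ [h01 _]] f01; exact: h01. Qed.

Lemma measurable_distortion_comp h f (D : set R) : measurable D ->
  distortion h -> (forall x, 0 <= f x <= 1) -> {homo f : x y / x <= y} ->
  measurable_fun D (fun x => h (f x)).
Proof.
move=> mD [_ [_ [_ h_nd]]] f01 f_nd; apply: nondecreasing_measurable => // x y xy.
by have /andP[? ?] := f01 x; have /andP[? ?] := f01 y; apply: h_nd => //; exact: f_nd.
Qed.

Lemma measurable_retention_derive1 Lb Rf : retention Lb Rf ->
  measurable_fun `[0, Lb] (derive1 Rf).
Proof.
case=> _ [_ Rf_der]; apply: measurable_derive1 => l.
by rewrite in_itv /= => /Rf_der[].
Qed.

Lemma Uag_add_Vins Lb (g F : R -> R -> R) (gIn Rf : R -> R) theta p :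
  measurable_fun `[0, Lb] (fun l => g theta (F theta l)) ->
  measurable_fun `[0, Lb] (fun l => gIn (F theta l)) ->
  measurable_fun `[0, Lb] (derive1 Rf) ->
  (forall l, 0 <= l <= Lb -> [/\ 0 <= gIn (F theta l) <= 1,
     0 <= g theta (F theta l) <= 1 & 0 <= derive1 Rf l <= 1]) ->
  Uag Lb g F theta Rf p + Vins Lb gIn F theta Rf p =
  intL Lb (fun l => gIn (F theta l)) - intL Lb (fun=> 1)
  - intL Lb (fun l => (gIn (F theta l) - g theta (F theta l)) * derive1 Rf l).
Proof.
move=> mg mgIn mR' h01; rewrite /Uag /Vins.
have := intL_surplus Lb mgIn mg mR' h01; lra.
Qed.

End yaari_utilities.

Section menu_properties.
Context {R : realType} {d : measure_display} {T : measurableType d}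
  {P : probability T R} {L : R -> T -> R} {tl th Lb : R} {mu : probability R R}
  {g : R -> R -> R} {gIn : R -> R} {Rs : R -> R -> R} {ps : R -> R}.
Local Notation F := (Fdist P L).
Local Notation Th := (Theta tl th).

Hypothesis L_measurable : forall theta, Th theta -> measurable_fun setT (L theta).
Hypothesis g_distortion : forall theta, Th theta -> distortion (g theta).
Hypothesis gIn_distortion : distortion gIn.
Hypothesis mu_Theta : mu Th = 1%E.
Hypothesis menu_Rs_ps : menu tl th Lb mu g gIn F Rs ps.
Hypothesis IR_Rs_ps : IR tl th Lb mu g gIn F Rs ps.

Let mTh : measurable Th := measurable_itv _.

Lemma tl_le_th : tl <= th.
Proof.
rewrite leNgt; apply/negP => thtl; move: mu_Theta.
by rewrite /Theta set_itv_ge ?bnd_simp -?ltNge // measure0 => /esym/eqP; rewrite onee_eq0.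
Qed.

Lemma Theta_tl : Th tl.
Proof. by rewrite /Theta /= in_itv /= lexx tl_le_th. Qed.

Lemma Rintegral_Theta_cst (c : R) : \int[mu]_(t in Th) c = c.
Proof.
have fine_mu : fine (mu Th) = 1 by rewrite mu_Theta.
by rewrite Rintegral_cst // -[RHS]mulr1; congr (_ * _); exact: fine_mu.
Qed.

Lemma Vins_Rintegral_ge0 : 0 <= \int[mu]_(t in Th) Vins Lb gIn F t (Rs t) (ps t).
Proof.
case: menu_Rs_ps => _ [_ Vint]; case: IR_Rs_ps => _.
by rewrite EFin_Rintegral // lee_fin.
Qed.

Lemma Fdist_Theta_ge0_le1 {t} l : Th t -> 0 <= F t l <= 1.
Proof. by move=> Tt; apply: Fdist_ge0_le1; exact: L_measurable. Qed.

Lemma measurable_distortion_Fdist {h t} : distortion h -> Th t ->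
  measurable_fun `[0, Lb] (fun l => h (F t l)).
Proof.
move=> hd Tt; apply: measurable_distortion_comp => // [x|].
  exact: Fdist_Theta_ge0_le1.
by apply: Fdist_nondecreasing; exact: L_measurable.
Qed.

Lemma distortion_Fdist_ge0_le1 {h t} l : distortion h -> Th t -> 0 <= h (F t l) <= 1.
Proof.
move=> hd Tt; apply: distortion_comp_ge0_le1 hd _ => x.
exact: Fdist_Theta_ge0_le1.
Qed.

Lemma integrable_distortion_Fdist {h t} : distortion h -> Th t ->
  (@lebesgue_measure R).-integrable `[0, Lb] (EFin \o fun l => h (F t l)).
Proof.
move=> hd Tt; apply: (intL_integrable _ 1) => [|l _].
  exact: measurable_distortion_Fdist.
by have /andP[h0 h1] := distortion_Fdist_ge0_le1 l hd Tt; rewrite ger0_norm.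
Qed.

Lemma Uag_add_Vins_menu t : Th t ->
  Uag Lb g F t (Rs t) (ps t) + Vins Lb gIn F t (Rs t) (ps t) =
  intL Lb (fun l => gIn (F t l)) - intL Lb (fun=> 1)
  - intL Lb (fun l => (gIn (F t l) - g t (F t l)) * derive1 (Rs t) l).
Proof.
move=> Tt; have [Rs_ret _] := menu_Rs_ps.
apply: Uag_add_Vins.
- exact: measurable_distortion_Fdist (g_distortion t Tt) Tt.
- exact: measurable_distortion_Fdist gIn_distortion Tt.
- exact: measurable_retention_derive1 (Rs_ret t Tt).
move=> l hl; rewrite !distortion_Fdist_ge0_le1 //; last exact: g_distortion.
by have [_ [_ /(_ l hl) []]] := Rs_ret t Tt.
Qed.

Lemma no_insurance_Vins_eq0 : IC tl th Lb g F Rs ps ->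
  (forall theta l, Th theta -> 0 <= l <= Lb -> derive1 (Rs theta) l = 1) ->
  forall theta, Th theta -> Vins Lb gIn F theta (Rs theta) (ps theta) = 0.
Proof.
move=> IC_Rs_ps R'1; have Ttl := Theta_tl.
have Uag_eq t t' : Th t -> Th t' ->
    Uag Lb g F t (Rs t') (ps t') = - ps t' + Unone Lb g F t.
  move=> Tt Tt'; rewrite /Uag /Unone; congr (_ - _).
  by apply: eq_Rintegral => l; rewrite inE /= in_itv /= => hl; rewrite R'1 ?mulr1.
have V_eq t : Th t -> Vins Lb gIn F t (Rs t) (ps t) = ps t.
  move=> Tt; rewrite /Vins -[RHS]subr0; congr (_ - _); apply: Rintegral0_eq => l.
  by rewrite /= in_itv /= => hl; rewrite R'1 ?subrr ?mulr0.
have ps_le t t' : Th t -> Th t' -> ps t <= ps t'.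
  by move=> Tt Tt'; have := IC_Rs_ps t t' Tt Tt'; rewrite !Uag_eq //; lra.
have ps_le0 t : Th t -> ps t <= 0.
  by move=> Tt; have [/(_ t Tt)] := IR_Rs_ps; rewrite Uag_eq //; lra.
have ps_tl_ge0 : 0 <= ps tl.
  suff <- : \int[mu]_(t in Th) Vins Lb gIn F t (Rs t) (ps t) = ps tl.
    exact: Vins_Rintegral_ge0.
  rewrite -[RHS]Rintegral_Theta_cst; apply: eq_Rintegral => t /[!inE] Tt.
  by rewrite V_eq //; apply/le_anti; rewrite !ps_le.
move=> t Tt; rewrite V_eq //; apply/le_anti.
by rewrite ps_le0 // (le_trans ps_tl_ge0) // ps_le.
Qed.

(* [rent theta] stands for the double integral over [[tl, theta]] in the
   premium formula; only [rent tl = 0] and its vanishing under full insurance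
   are used. *)
Section premium_schedule.
Context {rent : R -> R}.
Hypothesis premium : forall theta, Th theta ->
  ps theta = intL Lb (fun l => 1 - g tl (F tl l)) - rent theta
             - intL Lb (fun l => (1 - g theta (F theta l)) * derive1 (Rs theta) l).

Lemma Uag_premium t : Th t ->
  Uag Lb g F t (Rs t) (ps t) = rent t - intL Lb (fun l => 1 - g tl (F tl l)).
Proof. by move=> Tt; rewrite /Uag premium //; lra. Qed.

Hypothesis F_lipschitz : exists K : R, forall l theta theta', Th theta -> Th theta' ->
  `|F theta l - F theta' l| <= K * `|theta - theta'|.
Hypothesis F_derivable : forall l theta, tl < theta < th ->
  derivable (fun s => F s l) theta 1.
Hypothesis F_derive_le0 : forall l theta, tl < theta < th ->
  derive1 (fun s => F s l) theta <= 0.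

Lemma Fdist_nonincreasing_type l :
  {in `[tl, th] &, {homo (fun s => F s l) : x y /~ x <= y}}.
Proof.
apply: ler0_derive1_le_cc => [x|x|].
- by rewrite in_itv /=; exact: F_derivable.
- by rewrite in_itv /=; exact: F_derive_le0.
have [K FK] := F_lipschitz; apply: (@lipschitz_within_continuous _ _ K) => x y Tx Ty.
exact: FK.
Qed.

Lemma integrable_intL_gIn :
  mu.-integrable Th (EFin \o fun t => intL Lb (fun l => gIn (F t l))).
Proof.
have [_ [_ [_ gIn_nd]]] := gIn_distortion.
apply: measurable_bounded_integrable => //; first by rewrite ltey_eq fin_num_measure.
  apply: measurable_fun_itv_nonincreasing => t1 t2 T1 T2 t12.
  apply: le_Rintegral => //; try exact: integrable_distortion_Fdist.
  move=> l _; have /andP[? ?] := Fdist_Theta_ge0_le1 l T1.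
  have /andP[? ?] := Fdist_Theta_ge0_le1 l T2.
  by apply: gIn_nd => //; exact: Fdist_nonincreasing_type.
exists (intL Lb (fun=> 1)); split; first exact: num_real.
move=> M /ltW + t Tt; apply: le_trans.
rewrite ger0_norm; last first.
  apply: Rintegral_ge0 => l _.
  by have /andP[] := distortion_Fdist_ge0_le1 l gIn_distortion Tt.
apply: le_Rintegral => //; first exact: integrable_distortion_Fdist.
  by apply: (intL_integrable _ 1) => [|l _]; [exact: measurable_cst|rewrite normr1].
by move=> l _; have /andP[] := distortion_Fdist_ge0_le1 l gIn_distortion Tt.
Qed.

Lemma integral_gIn_ge : rent tl = 0 ->
  (\int[mu]_(theta in Th) (intL Lb (fun l => gIn (F theta l)))%:E
     >= (intL Lb (fun l => g tl (F tl l)))%:E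
        + \int[mu]_(theta in Th) (Uag Lb g F theta (Rs theta) (ps theta))%:E
        - (Uag Lb g F tl (Rs tl) (ps tl))%:E
        + \int[mu]_(theta in Th)
            (intL Lb (fun l => (gIn (F theta l) - g theta (F theta l))
                               * derive1 (Rs theta) l))%:E)%E.
Proof.
move=> rent_tl; have [_ [Uint Vint]] := menu_Rs_ps; have Ttl := Theta_tl.
pose I t := intL Lb (fun l => gIn (F t l)).
pose U t := Uag Lb g F t (Rs t) (ps t).
pose V t := Vins Lb gIn F t (Rs t) (ps t).
pose J t := intL Lb (fun l => (gIn (F t l) - g t (F t l)) * derive1 (Rs t) l).
pose c := intL Lb (fun=> 1).
have Iint : mu.-integrable Th (EFin \o I) := integrable_intL_gIn.
have cint : mu.-integrable Th (EFin \o fun=> c) by exact: finite_measure_integrable_cst.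
have Icint := integrableB_EFin mu mTh Iint cint.
have UVint := integrableD_EFin mu mTh Uint Vint.
have J_eq : {in Th, forall t, J t = I t - c - (U t + V t)}.
  by move=> t /[!inE] Tt; rewrite Uag_add_Vins_menu // /I /c /J; lra.
have Jint : mu.-integrable Th (EFin \o J).
  have IcUVint := integrableB_EFin mu mTh Icint UVint.
  by apply: eq_integrable IcUVint => // t Tt; rewrite /= J_eq.
have intJ : \int[mu]_(t in Th) J t =
    \int[mu]_(t in Th) I t - c - (\int[mu]_(t in Th) U t + \int[mu]_(t in Th) V t).
  rewrite (eq_Rintegral _ J_eq) (@RintegralB _ _ _ mu Th (fun t => I t - c)) //.
  by rewrite (@RintegralB _ _ _ mu Th I) // RintegralD // Rintegral_Theta_cst.
have U_tl : U tl = intL Lb (fun l => g tl (F tl l)) - c.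
  rewrite /U /c Uag_premium // rent_tl /intL RintegralB //; first by lra.
  - by apply: (intL_integrable _ 1) => [|l _]; [exact: measurable_cst|rewrite normr1].
  - exact: integrable_distortion_Fdist (g_distortion tl Ttl) Ttl.
rewrite (EFin_Rintegral mu mTh Iint) (EFin_Rintegral mu mTh Uint).
rewrite (EFin_Rintegral mu mTh Jint).
rewrite -!EFinD lee_fin -/(U tl) intJ U_tl.
have := Vins_Rintegral_ge0; lra.
Qed.

Lemma full_insurance_integral_gIn_ge :
  (forall theta, Th theta -> rent theta = 0) ->
  (forall theta l, Th theta -> 0 <= l <= Lb -> derive1 (Rs theta) l = 0) ->
  (\int[mu]_(theta in Th) (intL Lb (fun l => gIn (F theta l)))%:E
     >= (intL Lb (fun l => g tl (F tl l)))%:E)%E.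
Proof.
move=> rent0 R'0; have Ttl := Theta_tl.
pose k := intL Lb (fun l => 1 - g tl (F tl l)).
have U_eq t : Th t -> Uag Lb g F t (Rs t) (ps t) = - k.
  by move=> Tt; rewrite Uag_premium // rent0 // sub0r.
have intU : (\int[mu]_(t in Th) (Uag Lb g F t (Rs t) (ps t))%:E = (- k)%:E)%E.
  rewrite (eq_integral (fun=> (- k)%:E)) => [|t /[!inE] Tt]; last by rewrite U_eq.
  by rewrite integral_cst // -[RHS]mule1; congr (_ * _)%E; exact: mu_Theta.
have intJ : (\int[mu]_(t in Th)
    (intL Lb (fun l => (gIn (F t l) - g t (F t l)) * derive1 (Rs t) l))%:E = 0)%E.
  apply: integral0_eq => t Tt; congr EFin; apply: Rintegral0_eq => l.
  by rewrite /= in_itv /= => hl; rewrite R'0 ?mulr0.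
have := integral_gIn_ge (rent0 _ Ttl).
by rewrite intU intJ U_eq // -!EFinD addr0 addrK.
Qed.

End premium_schedule.

Lemma Vins_zero_menu_eq t : Th t -> ps t = 0 -> (forall l, 0 <= l <= Lb -> Rs t l = 0) ->
  Vins Lb gIn F t (Rs t) (ps t) = - intL Lb (fun l => 1 - gIn (F t l)).
Proof.
move=> Tt p0 R0; rewrite /Vins p0 sub0r; congr (- _).
have [Rs_ret _] := menu_Rs_ps.
have mgIn := measurable_distortion_Fdist gIn_distortion Tt.
apply: eq_intL_itvoo => [||l lLb].
- apply: measurable_funM; apply: measurable_funB => //; try exact: measurable_cst.
  exact: measurable_retention_derive1 (Rs_ret t Tt).
- by apply: measurable_funB => //; exact: measurable_cst.
suff -> : derive1 (Rs t) l = 0 by rewrite subr0 mulr1.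
rewrite derive1E (@near_eq_derive _ _ _ (Rs t) (cst 0) l 1) ?derive_cst //.
apply: filterS (near_in_itvoo lLb) => x; rewrite in_itv /= => /andP[x0 xL].
by rewrite R0 // !ltW.
Qed.

Lemma zero_menu_gIn_eq1 : (forall theta, Th theta ->
    ps theta = 0 /\ (forall l, 0 <= l <= Lb -> Rs theta l = 0)) ->
  {ae mu, forall theta, Th theta ->
     {ae @lebesgue_measure R, forall l, `[0, Lb]%classic l -> gIn (F theta l) = 1}}.
Proof.
move=> zero_menu.
pose deficit t := intL Lb (fun l => 1 - gIn (F t l)).
have V_eq t : Th t -> Vins Lb gIn F t (Rs t) (ps t) = - deficit t.
  by move=> Tt; have [p0 R0] := zero_menu t Tt; exact: Vins_zero_menu_eq.
have deficit_ge0 t : Th t -> 0 <= deficit t.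
  move=> Tt; apply: Rintegral_ge0 => l _.
  by have /andP[_ ?] := distortion_Fdist_ge0_le1 l gIn_distortion Tt; rewrite subr_ge0.
have [_ [_ Vint]] := menu_Rs_ps.
have deficit_int : mu.-integrable Th (EFin \o deficit).
  apply: eq_integrable (integrableN Vint) => // t /[!inE] Tt.
  by rewrite /= V_eq // opprK.
have : {ae mu, forall t, Th t -> deficit t = 0}.
  apply: ae_eq0_Rintegral_le0 => //.
  have -> : \int[mu]_(t in Th) deficit t =
      \int[mu]_(t in Th) (-1 * Vins Lb gIn F t (Rs t) (ps t)).
    by apply: eq_Rintegral => t /[!inE] Tt; rewrite V_eq // mulN1r opprK.
  by rewrite RintegralZl // mulN1r oppr_le0 Vins_Rintegral_ge0.
apply: filterS => t deficit0 Tt.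
have ae_deficit :
    {ae @lebesgue_measure R, forall l, `[0, Lb]%classic l -> 1 - gIn (F t l) = 0}.
  apply: ae_eq0_Rintegral_le0 => //.
  - apply: (intL_integrable _ 1) => [|l _].
      apply: measurable_funB; first exact: measurable_cst.
      exact: measurable_distortion_Fdist.
    have /andP[? ?] := distortion_Fdist_ge0_le1 l gIn_distortion Tt.
    by rewrite ger0_norm ?subr_ge0 // lerBlDr lerDl.
  - move=> l _; have /andP[_ ?] := distortion_Fdist_ge0_le1 l gIn_distortion Tt.
    by rewrite subr_ge0.
  - by move: (deficit0 Tt); rewrite /deficit /intL => ->.
have gIn1 : [set l | `[0, Lb]%classic l -> 1 - gIn (F t l) = 0] `<=`
    [set l | `[0, Lb]%classic l -> gIn (F t l) = 1].
  by move=> l /= gIn1 /gIn1 /eqP; rewrite subr_eq0 => /eqP <-.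
(* instance inference does not find this filter from the goal alone *)
exact: (filterS (F := almost_everywhere (@lebesgue_measure R)) gIn1 ae_deficit).
Qed.

End menu_properties.

Theorem lemma2
  (R : realType) (d : measure_display) (T : measurableType d)
  (P : probability T R) (L : R -> T -> R)
  (tl th Lb : R) (mu eta : probability R R) (q : R -> R)
  (g : R -> R -> R) (gIn : R -> R) (alpha : R)
  (Rs : R -> R -> R) (ps : R -> R) :
  let F := Fdist P L in
  let Th := Theta tl th in
  (* losses: bounded measurable with values in [0, Lb], continuous d.f. *)
  (forall theta, Th theta -> measurable_fun setT (L theta)) ->
  (forall theta w, Th theta -> 0 <= L theta w <= Lb) ->
  (forall theta, Th theta -> continuous (F theta)) ->
  (* mu: probability measure on Theta with Lebesgue density q *)
  (mu Th = 1%E) ->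
  measurable_fun setT q -> (forall x, 0 <= q x) ->
  (forall A, measurable A ->
     mu A = (\int[@lebesgue_measure R]_(x in A) (q x)%:E)%E) ->
  (* distortions *)
  (forall theta, Th theta -> distortion (g theta)) -> distortion gIn ->
  (* (A1) *)
  (forall theta t, Th theta -> 0 <= t <= 1 -> g theta t <= gIn t) ->
  (* (A2) *)
  (forall l theta, tl < theta < th -> derivable (fun s => F s l) theta 1) ->
  (exists K : R, forall l theta theta', Th theta -> Th theta' ->
     `|F theta l - F theta' l| <= K * `|theta - theta'|) ->
  (forall l theta, tl < theta < th -> derive1 (fun s => F s l) theta <= 0) ->
  (* (A3) *)
  (exists delta : R, forall theta t, Th theta -> 0 <= t <= 1 ->
     derivable (g theta) t 1 /\ derive1 (g theta) t <= delta) ->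
  (forall t theta, 0 <= t <= 1 -> tl < theta < th ->
     derivable (fun s => g s t) theta 1) ->
  (exists K : R, forall t theta theta', 0 <= t <= 1 -> Th theta -> Th theta' ->
     `|g theta t - g theta' t| <= K * `|theta - theta'|) ->
  (forall t theta, 0 < t < 1 -> tl < theta < th ->
     derive1 (fun s => g s t) theta <= 0) ->
  (* eta: probability measure on Theta equivalent to mu *)
  (eta Th = 1%E) ->
  (forall A, measurable A -> A `<=` Th -> (mu A = 0%E <-> eta A = 0%E)) ->
  0 < alpha <= 1 ->
  (* the menu (Rs, ps) is incentive efficient and optimal for (W) *)
  incentive_efficient tl th Lb mu g gIn F Rs ps ->
  optimal_W tl th Lb mu g gIn F eta alpha Rs ps ->
  (* premium formula *)
  (forall theta, Th theta ->
     ps theta =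
       intL Lb (fun l => 1 - g tl (F tl l))
       - Rintegral (@lebesgue_measure R) `[tl, theta]
           (fun s => intL Lb (fun l =>
              (derive1 (fun s' => g s' (F s l)) s
               + derive1 (g s) (F s l) * derive1 (fun s' => F s' l) s)
              * derive1 (Rs s) l))
       - intL Lb (fun l => (1 - g theta (F theta l)) * derive1 (Rs theta) l)) ->
  (* (1) *)
  ((forall theta l, Th theta -> 0 <= l <= Lb -> derive1 (Rs theta) l = 0) ->
     (\int[mu]_(theta in Th) (intL Lb (fun l => gIn (F theta l)))%:E
        >= (intL Lb (fun l => g tl (F tl l)))%:E)%E) /\
  (* (2) *)
  ((forall theta l, Th theta -> 0 <= l <= Lb -> derive1 (Rs theta) l = 1) ->
     forall theta, Th theta -> Vins Lb gIn F theta (Rs theta) (ps theta) = 0) /\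
  (* (3) *)
  ((forall theta l, Th theta -> 0 <= l <= Lb -> 0 < derive1 (Rs theta) l < 1) ->
     (\int[mu]_(theta in Th) (intL Lb (fun l => gIn (F theta l)))%:E
        >= (intL Lb (fun l => g tl (F tl l)))%:E
           + \int[mu]_(theta in Th) (Uag Lb g F theta (Rs theta) (ps theta))%:E
           - (Uag Lb g F tl (Rs tl) (ps tl))%:E
           + \int[mu]_(theta in Th)
               (intL Lb (fun l => (gIn (F theta l) - g theta (F theta l))
                                  * derive1 (Rs theta) l))%:E)%E) /\
  (* moreover *)
  ((forall theta, Th theta -> ps theta = 0 /\ (forall l, 0 <= l <= Lb -> Rs theta l = 0)) ->
     {ae mu, forall theta, Th theta ->
        {ae @lebesgue_measure R, forall l, `[0, Lb]%classic l -> gIn (F theta l) = 1}}).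
Proof.
(* Not needed: optimality for (W), efficiency beyond feasibility, eta, alpha,
   the density q, the bound on and continuity of the losses, (A1) and (A3). *)
move=> F Th hLm _ _ hmuTh _ _ _ hg hgIn _ hdF hFlip hdF0 _ _ _ _ _ _ _
  [[hmenu [hIR hIC]] _] _ hprem.
split; [|split; [|split]].
- move=> R'0.
  apply: (full_insurance_integral_gIn_ge hLm hg hgIn hmuTh hmenu hIR hprem) => //.
  move=> t; rewrite /Th /Theta /= in_itv /= => /andP[_ tth].
  apply: Rintegral0_eq => s; rewrite /= in_itv /= => /andP[tls st].
  apply: Rintegral0_eq => l; rewrite /= in_itv /= => hl.
  by rewrite R'0 ?mulr0 // /Th /Theta /= in_itv /= tls (le_trans st tth).
- exact: (no_insurance_Vins_eq0 hmuTh hmenu hIR hIC).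
- move=> _; apply: (integral_gIn_ge hLm hg hgIn hmuTh hmenu hIR hprem) => //.
  by rewrite set_itv1 Rintegral_set1.
- exact: (zero_menu_gIn_eq1 hLm hgIn hmenu hIR).
Qed.
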